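(* In the three-door Monty Hall game described in the context, let $Q$ be a fully supported mixed strategy of Monte, and let $\pi_\theta=Q(\{(\theta,d):d\neq\theta\})$ for $\theta\in\{1,2,3\}$. Then every pure Bayesian strategy for $Q$ is always-switching, so every Bayesian strategy for $Q$ is a mixture of always-switching strategies. Moreover, if (after relabeling the doors) $\pi_1\ge\pi_2\ge\pi_3>0$, the pure Bayesian strategies are exactly: (1) $3\,\mathrm{s}\,\mathrm{s}$ alone if $\pi_1\ge\pi_2>\pi_3$; (2) $2\,\mathrm{s}\,\mathrm{s}$ and $3\,\mathrm{s}\,\mathrm{s}$ if $\pi_1>\pi_2=\pi_3$; (3) $1\,\mathrm{s}\,\mathrm{s}$, $2\,\mathrm{s}\,\mathrm{s}$ and $3\,\mathrm{s}\,\mathrm{s}$ if $\pi_1=\pi_2=\pi_3=1/3$.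
   Context: Doors are numbered $1,2,3$. A pure strategy of Monte is a pair $(\theta,d)$ with $\theta\in\{1,2,3\}$ (the door hiding the prize) and $d\in\{1,2,3\}\setminus\{\theta\}$ (six strategies). A pure strategy of Conie is a triple $x\,a\,b$ with $x\in\{1,2,3\}$ and $a,b\in\{\mathrm{h},\mathrm{s}\}$ (twelve strategies). Under the profile $((\theta,d),x\,a\,b)$: Monte offers door $y=\theta$ if $x\neq\theta$ and $y=d$ if $x=\theta$; Conie's action is $a$ if $y$ is the smaller of the two doors in $\{1,2,3\}\setminus\{x\}$ and $b$ otherwise; her final choice is $z=x$ for action $\mathrm{h}$ and $z=y$ for action $\mathrm{s}$; she wins (payoff 1) iff $z=\theta$, else payoff 0. Strategies $x\,\mathrm{s}\,\mathrm{s}$ are always-switching. A mixed strategy is a probability distribution on pure strategies; it is fully supported if every pure strategy has positive probability. For a mixed strategy $Q$ of Monte, a (mixed) strategy $P$ of Conie is Bayesian if it maximizes Conie's winning probability $\sum_{A,S}P(A)Q(S)C(A,S)$ over all mixed strategies of Conie (with $P$, $Q$ independent); a pure Bayesian strategy is a pure strategy with this property. *)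

(* Doors 1,2,3 are represented by the ordinals 0,1,2 of 'I_3
   (order-preserving relabeling, so "smaller door" is unchanged). *)
From mathcomp Require Import all_boot all_order all_algebra.
Set Implicit Arguments. Unset Strict Implicit. Unset Printing Implicit Defensive.
Import Order.TTheory GRing.Theory Num.Theory.
Local Open Scope ring_scope.

Notation door := 'I_3.

Definition act := bool.
Definition hold : act := false.
Definition switch : act := true.

Definition monte := {p : door * door | p.1 != p.2}.
Definition theta_of (S : monte) : door := (val S).1.
Definition d_of (S : monte) : door := (val S).2.

Definition conie := (door * act * act)%type.

Definition offered (S : monte) (x : door) : door :=
  if x != theta_of S then theta_of S else d_of S.

Definition is_smaller_other (x y : door) : bool :=
  (y != x) && [forall w : door, ((w != x) && (w != y)) ==> (y < w)%N].

Definition final_choice (A : conie) (S : monte) : door :=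
  let: (x, a, b) := A in
  let y := offered S x in
  let c := if is_smaller_other x y then a else b in
  if c == switch then y else x.

Definition payoff {R : numDomainType} (A : conie) (S : monte) : R :=
  (final_choice A S == theta_of S)%:R.

Definition always_switching (A : conie) : bool :=
  (A.1.2 == switch) && (A.2 == switch).

Definition mixed {R : numDomainType} {T : finType} (P : {ffun T -> R}) : Prop :=
  (forall t, 0 <= P t) /\ \sum_t P t = 1.

Definition fully_supported {R : numDomainType} {T : finType} (P : {ffun T -> R}) : Prop :=
  mixed P /\ forall t, 0 < P t.

Definition win_prob {R : numDomainType} (P : {ffun conie -> R}) (Q : {ffun monte -> R}) : R :=
  \sum_A \sum_S P A * Q S * payoff A S.

Definition bayesian {R : numDomainType} (Q : {ffun monte -> R}) (P : {ffun conie -> R}) : Prop :=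
  mixed P /\ forall P' : {ffun conie -> R}, mixed P' -> win_prob P' Q <= win_prob P Q.

Definition pure_mixed {R : numDomainType} (A : conie) : {ffun conie -> R} :=
  [ffun B => (B == A)%:R].

Definition pure_bayesian {R : numDomainType} (Q : {ffun monte -> R}) (A : conie) : Prop :=
  bayesian Q (pure_mixed A).

Definition prior {R : numDomainType} (Q : {ffun monte -> R}) (th : door) : R :=
  \sum_(S | theta_of S == th) Q S.

(* Averaging over a mixed strategy cannot beat the best pure strategy, and a
   Bayesian mixed strategy is supported on best responses, so everything reduces
   to the expected payoffs of Conie's twelve pure strategies.  Conditioning on
   the door y Monte offers after Conie picks x, holding wins exactly when Monte
   plays (x, y) and switching wins exactly when the prize is behind y, so
   x a b earns Q(x,y) or pi_y on each of the two branches.  Against a fully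
   supported Q, holding on a branch is strictly beaten by switching from another
   initial door: x h b loses to (lower other door) s s and x s h loses to
   (higher other door) s s.  Hence best responses always switch, and x s s earns
   1 - pi_x, so the pure Bayesian strategies are the x s s with pi_x minimal. *)

From mathcomp Require Import all_boot all_order all_algebra.
From mathcomp Require Import lra.

Set Implicit Arguments.
Unset Strict Implicit.
Unset Printing Implicit Defensive.
Import Order.TTheory GRing.Theory Num.Theory.
Local Open Scope ring_scope.

Notation d0 := (@Ordinal 3 0 isT).
Notation d1 := (@Ordinal 3 1 isT).
Notation d2 := (@Ordinal 3 2 isT).

Lemma doorP (x : door) : [\/ x = d0, x = d1 | x = d2].
Proof.
by case: x => [[|[|[|//]]] ?]; [constructor 1 | constructor 2 | constructor 3];
  apply: val_inj.
Qed.

Lemma forall_doorE (P : pred door) : [forall w, P w] = [&& P d0, P d1 & P d2].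
Proof.
apply/forallP/and3P => [H|[? ? ?] w]; first by split; apply: H.
by case: (doorP w) => ->.
Qed.

Definition smaller_other (x : door) : door := if x == d0 then d1 else d0.
Definition larger_other (x : door) : door := if x == d2 then d1 else d2.

Lemma is_smaller_otherE x y : is_smaller_other x y = (y == smaller_other x).
Proof.
rewrite /is_smaller_other forall_doorE.
by case: (doorP x) => ->; case: (doorP y) => ->.
Qed.

Lemma neq_smaller_other x : x != smaller_other x. Proof. by case: (doorP x) => ->. Qed.
Lemma neq_larger_other x : x != larger_other x. Proof. by case: (doorP x) => ->. Qed.

Lemma door_cover (a b c : door) : [/\ a != b, b != c & a != c] ->
  forall y, [\/ y = a, y = b | y = c].
Proof.
move=> [ab bc ac] y.
suff : y \in [set a; b; c].
  by rewrite !inE => /orP[/orP[]|] /eqP ->; [constructor 1 | constructor 2 | constructor 3].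
suff -> : [set a; b; c] = setT by rewrite inE.
apply/eqP; rewrite eqEcard subsetT cardsT card_ord.
by rewrite setUC cardsU1 cards2 !inE ab ![c == _]eq_sym (negbTE ac) (negbTE bc).
Qed.

Notation monte_of th d := (exist _ (th, d) isT : monte).

Lemma sum_monteE (R : nmodType) (F : monte -> R) :
  \sum_S F S = F (monte_of d0 d1) + F (monte_of d0 d2) + F (monte_of d1 d0)
               + F (monte_of d1 d2) + F (monte_of d2 d0) + F (monte_of d2 d1).
Proof.
pose G (p : door * door) := oapp F 0 (insub p).
have -> : \sum_S F S = \sum_(p | p.1 != p.2) G p.
  rewrite [RHS](reindex_omap (val : monte -> door * door) insub) => [|p p12].
    by apply: eq_big => [S|S _]; rewrite ?(valP S) /G valK ?eqxx.
  by rewrite insubT.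
have -> : \sum_(p | p.1 != p.2) G p = \sum_i \sum_(j | i != j) G (i, j).
  by rewrite pair_big_dep; apply: eq_bigr => -[].
rewrite !big_ord_recl !big_ord0.
rewrite !(big_mkcond (fun j => _ != j)) !big_ord_recl !big_ord0 /= /G.
rewrite !insubT /= !add0r !addr0 !addrA.
by congr (F _ + F _ + F _ + F _ + F _ + F _); apply/val_inj/eqP.
Qed.

Lemma sum_cond_monteE (V : nmodType) (P : pred monte) (F : monte -> V) :
  \sum_(S | P S) F S =
    (if P (monte_of d0 d1) then F (monte_of d0 d1) else 0)
  + (if P (monte_of d0 d2) then F (monte_of d0 d2) else 0)
  + (if P (monte_of d1 d0) then F (monte_of d1 d0) else 0)
  + (if P (monte_of d1 d2) then F (monte_of d1 d2) else 0)
  + (if P (monte_of d2 d0) then F (monte_of d2 d0) else 0)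
  + (if P (monte_of d2 d1) then F (monte_of d2 d1) else 0).
Proof. by rewrite big_mkcond sum_monteE. Qed.

Lemma mixed_pure (R : realFieldType) (T : finType) (t : T) :
  mixed ([ffun s => (s == t)%:R] : {ffun T -> R}).
Proof.
split=> [s|]; first by rewrite ffunE ler0n.
by rewrite (bigD1 t) //= ffunE eqxx big1 ?addr0 // => s /negbTE s_t; rewrite ffunE s_t.
Qed.

Section MixedStrategies.
Variables (R : realFieldType) (T : finType) (P : {ffun T -> R}).
Hypothesis P_mixed : mixed P.

Lemma mixed_average_le (f : T -> R) M : (forall t, f t <= M) -> \sum_t P t * f t <= M.
Proof.
case: P_mixed => P_ge0 P_sum fM.
rewrite -[leRHS]mul1r -P_sum mulr_suml.
by apply: ler_sum => t _; apply: ler_wpM2l.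
Qed.

Lemma mixed_support_max (f : T -> R) t :
  (forall s, f s <= \sum_u P u * f u) -> 0 < P t -> forall s, f s <= f t.
Proof.
case: P_mixed => P_ge0 P_sum; set M := \sum_t _ => fM Pt s.
have gap_ge0 u : 0 <= P u * (M - f u) by rewrite mulr_ge0 ?subr_ge0.
have : \sum_u P u * (M - f u) = 0.
  under eq_bigr do rewrite mulrBr.
  by rewrite sumrB -mulr_suml P_sum mul1r subrr.
move/psumr_eq0P/(_ t isT)=> /(_ (fun u _ => gap_ge0 u)) /eqP.
by rewrite mulf_eq0 gt_eqF //= subr_eq0 => /eqP <-.
Qed.

End MixedStrategies.

Section Game.
Variables (R : realFieldType) (Q : {ffun monte -> R}).

Definition exp_payoff (A : conie) : R := \sum_S Q S * payoff A S.

Definition monte_prob (th d : door) : R :=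
  \sum_(S | (theta_of S == th) && (d_of S == d)) Q S.

Definition branch_payoff (x y : door) (c : act) : R :=
  if c == switch then prior Q y else monte_prob x y.

Lemma win_probE (P : {ffun conie -> R}) : win_prob P Q = \sum_A P A * exp_payoff A.
Proof.
apply: eq_bigr => A _; rewrite mulr_sumr.
by apply: eq_bigr => S _; rewrite mulrA.
Qed.

Lemma win_prob_pure A : win_prob (pure_mixed A) Q = exp_payoff A.
Proof.
rewrite win_probE (bigD1 A) //= ffunE eqxx mul1r big1 ?addr0 // => B /negbTE B_A.
by rewrite ffunE B_A mul0r.
Qed.

Lemma pure_bayesianP A : pure_bayesian Q A <-> forall B, exp_payoff B <= exp_payoff A.
Proof.
split=> [[_ A_max] B | A_max]; first by rewrite -!win_prob_pure; apply/A_max/mixed_pure.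
split=> [|P P_mixed]; first exact: mixed_pure.
by rewrite win_prob_pure win_probE mixed_average_le.
Qed.

Lemma bayesian_support P A : bayesian Q P -> 0 < P A -> pure_bayesian Q A.
Proof.
move=> [P_mixed P_max] PA; apply/pure_bayesianP.
apply: mixed_support_max PA => // B.
by rewrite -win_probE -win_prob_pure; apply/P_max/mixed_pure.
Qed.

Lemma priorE x :
  prior Q x = monte_prob x (smaller_other x) + monte_prob x (larger_other x).
Proof.
rewrite /prior /monte_prob !sum_cond_monteE.
by case: (doorP x) => -> /=; rewrite ?addr0 ?add0r.
Qed.

Lemma exp_payoffE x a b : exp_payoff (x, a, b) =
  branch_payoff x (smaller_other x) a + branch_payoff x (larger_other x) b.
Proof.
rewrite /exp_payoff /branch_payoff !priorE /monte_prob.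
case: (doorP x) => ->; case: a; case: b;
  rewrite /= !sum_cond_monteE /payoff /final_choice /offered !is_smaller_otherE /=;
  rewrite ?mulr1 ?mulr0 ?addr0 ?add0r; lra.
Qed.

Hypothesis Q_sum : \sum_S Q S = 1.
Hypothesis Q_pos : forall S, 0 < Q S.

Lemma prior_partition x :
  prior Q x + prior Q (smaller_other x) + prior Q (larger_other x) = 1.
Proof.
rewrite -Q_sum !priorE /monte_prob !sum_cond_monteE.
by case: (doorP x) => -> /=; rewrite ?addr0 ?add0r; lra.
Qed.

Lemma monte_prob_gt0 x y : x != y -> 0 < monte_prob x y.
Proof.
move=> xy; rewrite /monte_prob (bigD1 (Sub (x, y) xy : monte)) ?eqxx //=.
by rewrite ltr_wpDr ?sumr_ge0 // => S _; apply: ltW.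
Qed.

Lemma prior_gt0 x : 0 < prior Q x.
Proof. by rewrite priorE addr_gt0 ?monte_prob_gt0 ?neq_smaller_other ?neq_larger_other. Qed.

Lemma exp_payoff_switch x : exp_payoff (x, switch, switch) = 1 - prior Q x.
Proof. by rewrite exp_payoffE /branch_payoff /=; have := prior_partition x; lra. Qed.

Lemma branch_payoff_lt x y c :
  x != y -> branch_payoff x y c < monte_prob x y + prior Q y.
Proof.
move=> /monte_prob_gt0 xy_pos; have := prior_gt0 y.
by case: c; rewrite /branch_payoff /=; lra.
Qed.

Lemma switching_dominates A :
  ~~ always_switching A -> exists y, exp_payoff A < exp_payoff (y, switch, switch).
Proof.
case: A => [[x a] b]; rewrite /always_switching exp_payoffE /=.
have prior_x := priorE x; have partition_x := prior_partition x.
case: a => /= [not_b | _].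
- exists (larger_other x); rewrite exp_payoff_switch /branch_payoff (negbTE not_b) /=.
  have := monte_prob_gt0 (neq_smaller_other x); lra.
- exists (smaller_other x).
  rewrite exp_payoff_switch [branch_payoff x (smaller_other x) _]/branch_payoff /=.
  have := branch_payoff_lt b (neq_larger_other x); lra.
Qed.

Lemma pure_bayesian_switching A : pure_bayesian Q A -> always_switching A.
Proof.
move/pure_bayesianP=> A_max; apply/negPn/negP => /switching_dominates [y].
by rewrite ltNge A_max.
Qed.

Lemma pure_bayesianE A : pure_bayesian Q A <->
  exists2 x, A = (x, switch, switch) & forall y, prior Q x <= prior Q y.
Proof.
split=> [A_bayes | [x -> x_min]].
  have /pure_bayesianP A_max := A_bayes.
  case: A A_bayes A_max => [[x a] b] /pure_bayesian_switching.
  move=> /andP[/eqP /= -> /eqP /= ->] A_max.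
  by exists x => // y; have := A_max (y, switch, switch); rewrite !exp_payoff_switch; lra.
apply/pure_bayesianP => B.
have [y B_le] : exists y, exp_payoff B <= exp_payoff (y, switch, switch).
  have [/switching_dominates [y /ltW] | ] := boolP (~~ always_switching B).
    by exists y.
  by case: B => [[z a] b] /negPn /andP[/eqP /= -> /eqP /= ->]; exists z.
by apply: le_trans B_le _; rewrite !exp_payoff_switch lerD2l lerN2.
Qed.

End Game.

Theorem mainTheorem3 (R : realFieldType) (Q : {ffun monte -> R}) :
  fully_supported Q ->
  (forall A : conie, pure_bayesian Q A -> always_switching A) /\
  (forall P : {ffun conie -> R}, bayesian Q P ->
     forall A : conie, 0 < P A -> always_switching A) /\
  (forall a b c : door, [/\ a != b, b != c & a != c] ->
     prior Q b <= prior Q a -> prior Q c <= prior Q b ->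
     [/\ prior Q c < prior Q b ->
           (forall A, pure_bayesian Q A <-> A = (c, switch, switch)),
         prior Q b < prior Q a -> prior Q b = prior Q c ->
           (forall A, pure_bayesian Q A <->
              A = (b, switch, switch) \/ A = (c, switch, switch))
       & prior Q a = 1 / 3 -> prior Q b = 1 / 3 -> prior Q c = 1 / 3 ->
           (forall A, pure_bayesian Q A <->
              [\/ A = (a, switch, switch), A = (b, switch, switch)
                | A = (c, switch, switch)])]).
Proof.
move=> [[_ Q_sum] Q_pos].
have switching := pure_bayesian_switching Q_sum Q_pos.
split=> //; split=> [P P_bayes A PA | a b c abc ba cb].
  exact/switching/(bayesian_support P_bayes PA).
have cover := door_cover abc.
have min_prior x : (forall y, prior Q x <= prior Q y) <->
    [/\ prior Q x <= prior Q a, prior Q x <= prior Q b & prior Q x <= prior Q c].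
  split=> [x_min | [? ? ?] y]; first by split; apply: x_min.
  by case: (cover y) => ->.
split=> [cb_lt | ba_lt bc | a3 b3 c3] A; rewrite (pure_bayesianE Q_sum Q_pos); split.
- by move=> [x -> /min_prior[]]; case: (cover x) => -> // *; exfalso; lra.
- by move=> ->; exists c => //; apply/min_prior; split; lra.
- move=> [x -> /min_prior[]].
  by case: (cover x) => -> *; [exfalso; lra | left | right].
- by case=> ->; [exists b | exists c] => //; apply/min_prior; split; lra.
- move=> [x -> _].
  by case: (cover x) => ->; [constructor 1 | constructor 2 | constructor 3].
- by case=> ->; [exists a | exists b | exists c] => //; apply/min_prior; rewrite a3 b3 c3.
Qed.
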